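(* A cubical iterated graph system is of bounded geometry.
   Context: Graphs: $(V,E)$, $V$ finite non-empty, $E\subseteq V\times V$, $(x,y)\in E\Rightarrow(y,x)\notin E$; $\{x,y\}\in E$ means either orientation; a path is a sequence $[x_1,\dots,x_k]$ ($k\ge1$) with $\{x_i,x_{i+1}\}\in E$, of length $k-1$; $d_G$ is the path metric. An iterated graph system (IGS) $\mathfrak R$ consists of a connected graph $G_1=(S,E)$, a finite set $\mathcal T$ of types, a surjective typing $\mathfrak t:E\to\mathcal T$ and non-empty gluing rules $I_t\subseteq S\times S$. With $W_m=S^m$, $W_\#=\bigcup_{m\ge1}W_m$, $[w]_k=w_1\cdots w_k$, the replacement graphs $G_m=(W_m,E_m)$ are defined recursively: $(w,v)\in E_{m+1}$ iff either (1) $[w]_m=[v]_m$ and $(w_{m+1},v_{m+1})\in E$ (type $\mathfrak t(w_{m+1},v_{m+1})$), or (2) $([w]_m,[v]_m)\in E_m$ and $(w_{m+1},v_{m+1})\in I_{\mathfrak t([w]_m,[v]_m)}$ (type $\mathfrak t([w]_m,[v]_m)$). For $n\ge k$, $\pi_{n,k}$ maps a path of $G_n$ to the path of $G_k$ obtained by replacing each vertex $w$ by $[w]_k$ and deleting consecutive repetitions. A path $\theta$ in $G_m$ is an intersection path if there are paths $\theta_n$ in $G_n$ ($n\in\mathbb N$) with $\theta_m=\theta$, $\pi_{n,k}(\theta_n)=\theta_k$ for $n>k$, and $\lim_n\operatorname{len}(\theta_n)<\infty$. $\mathcal N(w)=\{v\in W_{|w|}:$ there is an intersection path from $w$ to $v\}$;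 $\mathfrak R$ is of bounded geometry if $\sup_{w\in W_\#}\operatorname{diam}_{d_{G_{|w|}}}(\mathcal N(w))<\infty$. Mapping of IGS $\varphi:\mathfrak R\to\mathfrak R'$: a graph mapping $G_1\to G_1'$ (edges go to edges or are collapsed) such that (i) if $\varphi(w_1)=\varphi(v_1)$ for an edge $\{w_1,v_1\}$ of type $t$ then $\varphi(w_2)=\varphi(v_2)$ for all $(w_2,v_2)\in I_t$; (ii) if $(w_1,v_1)\in E$ has type $t$ and $(\varphi(w_1),\varphi(v_1))\in E'$ has type $t'$ then $(\varphi(w_2),\varphi(v_2))\in I'_{t'}$ for all $(w_2,v_2)\in I_t$; (iii) if $(w_1,v_1)\in E$ has type $t$ and $(\varphi(v_1),\varphi(w_1))\in E'$ has type $t'$ then $(\varphi(v_2),\varphi(w_2))\in I'_{t'}$ for all $(w_2,v_2)\in I_t$. An isomorphism of IGS is a graph isomorphism such that it and its inverse are mappings of IGS; $\mathfrak R\subseteq\mathfrak R'$ (sub-system) means $S\subseteq S'$, same types, inclusion is a mapping of IGS. Cubical IGS: for integers $d_*\ge1,s_*\ge1,L_*\ge3$, $\mathfrak R(d_*,L_*,s_* )$ has symbols $\{1,\dots,L_*\}^{d_*}\times\{\underline1,\dots,\underline{s_*}\}$ with coordinates $c_i$ and sheet $s$; types $t_1,\dots,t_{d_*}$; $(w,v)$ is an edge of type $t_j$ iff $c_i(v)=c_i(w)$ ($i\ne j$), $c_j(v)=c_j(w)+1$; $(w,v)\in I_{t_j}$ iff $c_i(w)=c_i(v)$ ($i\ne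 j$), $(c_j(w),c_j(v))=(L_*,1)$, $s(w)=s(v)$. Sheet- and other-coordinate-preserving maps: $\eta_j:c_j\mapsto L_*+1-c_j$; $\alpha^+_{j,k}$ ($j\ne k$) swaps $c_j,c_k$; $\alpha^-_{j,k}$: $c_k\mapsto L_*+1-c_j$, $c_j\mapsto L_*+1-c_k$; $\mathcal G$ is the set of these. A cubical IGS is a sub-system $\mathfrak R\subseteq\mathfrak R(d_*,L_*,s_* )$ with: (C1) for each $j$, every symbol with $c_i\in\{1,L_*\}$ for all $i\ne j$ and sheet $\underline1$ (condition $(\ast_j)$) is in $S(\mathfrak R)$; (C2) if $w,v$ satisfy $(\ast_j)$, agree in coordinates $i\ne j$, and $c_j(v)=c_j(w)+1$, then $(w,v)\in E(\mathfrak R)$; (C3) if $w,v$ satisfy $(\ast_j)$, agree in coordinates $i\ne j$, and $(c_j(w),c_j(v))=(L_*,1)$, then $(w,v)\in I_{t_j}(\mathfrak R)$; (C4) each $\alpha\in\mathcal G$ restricts to an isomorphism of IGS $\mathfrak R\to\mathfrak R$. *)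

From mathcomp Require Import all_boot.

Set Implicit Arguments.
Unset Strict Implicit.
Unset Printing Implicit Defensive.

(* Iterated graph systems over a finite carrier type [V] of potential  *)
(* symbols and a finite type [T] of types.                             *)
(*  igs_sym R       = the symbol set S (a subset of V)                 *)
(*  igs_ety R t x y = (x,y) is an edge of G_1 of type t                *)
(*                    (E = union over t; the typing is the map E -> T) *)
(*  igs_glue R t    = the gluing rule I_t                              *)
Record IGS (V T : finType) := MkIGS {
  igs_sym : {set V};
  igs_ety : T -> rel V;
  igs_glue : T -> rel V
}.

Section IGSDefs.
Variables (V T : finType).

Definition igs_edge (R : IGS V T) (x y : V) : bool :=
  [exists t, igs_ety R t x y].

Definition igs_uedge (R : IGS V T) (x y : V) : bool :=
  igs_edge R x y || igs_edge R y x.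

Definition IGS_wf (R : IGS V T) : Prop :=
  igs_sym R != set0 /\
  (forall t x y, igs_ety R t x y -> x \in igs_sym R /\ y \in igs_sym R) /\
  (forall x y, igs_edge R x y -> ~~ igs_edge R y x) /\
  (forall t t' x y, igs_ety R t x y -> igs_ety R t' x y -> t = t') /\
  (forall t, exists x y, igs_ety R t x y) /\
  (forall t, exists x y, igs_glue R t x y) /\
  (forall t x y, igs_glue R t x y -> x \in igs_sym R /\ y \in igs_sym R) /\
  (forall x y, x \in igs_sym R -> y \in igs_sym R ->
     exists p, path (igs_uedge R) x p /\ last x p = y).

(* Replacement graphs G_m.  Vertices of G_m are words of length m over S,
   represented as sequences w = [:: w_1; ...; w_m].
   [Em R w v t] means (w,v) \in E_m with type t. *)
Inductive Em (R : IGS V T) : seq V -> seq V -> T -> Prop :=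
| Em_in (w : seq V) (a b : V) (t : T) :
    all (mem (igs_sym R)) w -> igs_ety R t a b ->
    Em R (rcons w a) (rcons w b) t
| Em_glue (w v : seq V) (a b : V) (t : T) :
    Em R w v t -> igs_glue R t a b ->
    Em R (rcons w a) (rcons v b) t.

Definition adj (R : IGS V T) (w v : seq V) : Prop :=
  exists t, Em R w v t \/ Em R v w t.

Definition word (R : IGS V T) (m : nat) (w : seq V) : bool :=
  (size w == m) && all (mem (igs_sym R)) w.

Fixpoint chain_adj (R : IGS V T) (x : seq V) (p : seq (seq V)) : Prop :=
  match p with
  | [::] => True
  | y :: p' => adj R x y /\ chain_adj R y p'
  end.

(* p is a path (non-empty sequence of vertices) in G_m; its length is
   (size p).-1 *)
Definition is_path (R : IGS V T) (m : nat) (p : seq (seq V)) : Prop :=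
  match p with
  | [::] => False
  | x :: p' => all (word R m) p /\ chain_adj R x p'
  end.

Fixpoint squash (s : seq (seq V)) : seq (seq V) :=
  match s with
  | x :: ((y :: _) as s') => if x == y then squash s' else x :: squash s'
  | _ => s
  end.

Definition proj (k : nat) (p : seq (seq V)) : seq (seq V) :=
  squash (map (take k) p).

(* theta is an intersection path in G_m.  The lengths len(theta_n) are
   non-decreasing in n, so "lim len(theta_n) < oo" is stated as
   boundedness of the lengths. *)
Definition is_ipath (R : IGS V T) (m : nat) (theta : seq (seq V)) : Prop :=
  exists Theta : nat -> seq (seq V),
    [/\ (forall n, 1 <= n -> is_path R n (Theta n)),
        Theta m = theta,
        (forall n k, 1 <= k -> k < n -> proj k (Theta n) = Theta k)
      & exists B, forall n, (size (Theta n)).-1 <= B].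

Definition inN (R : IGS V T) (w v : seq V) : Prop :=
  exists theta, [/\ is_ipath R (size w) theta, ohead theta = Some w
                  & last w theta = v].

Definition bounded_geometry (R : IGS V T) : Prop :=
  exists C : nat, forall w : seq V, 1 <= size w -> all (mem (igs_sym R)) w ->
    forall u v, inN R w u -> inN R w v ->
      exists p, [/\ is_path R (size w) p, ohead p = Some u, last u p = v
                  & (size p).-1 <= C].

End IGSDefs.

Definition IGS_mapping (V T V' T' : finType) (phi : V -> V')
    (R : IGS V T) (R' : IGS V' T') : Prop :=
  [/\ (forall x, x \in igs_sym R -> phi x \in igs_sym R'),
      (forall x y, igs_edge R x y ->
         [\/ igs_edge R' (phi x) (phi y), igs_edge R' (phi y) (phi x)
           | phi x = phi y]),
      (forall t x y, igs_ety R t x y -> phi x = phi y ->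
         forall x2 y2, igs_glue R t x2 y2 -> phi x2 = phi y2),
      (forall t t' x y, igs_ety R t x y -> igs_ety R' t' (phi x) (phi y) ->
         forall x2 y2, igs_glue R t x2 y2 -> igs_glue R' t' (phi x2) (phi y2))
    &
      (forall t t' x y, igs_ety R t x y -> igs_ety R' t' (phi y) (phi x) ->
         forall x2 y2, igs_glue R t x2 y2 -> igs_glue R' t' (phi y2) (phi x2))].

Definition IGS_iso (V T V' T' : finType) (phi : V -> V')
    (R : IGS V T) (R' : IGS V' T') : Prop :=
  exists psi : V' -> V,
    [/\ {in igs_sym R, cancel phi psi},
        {in igs_sym R', cancel psi phi},
        (forall x y, x \in igs_sym R -> y \in igs_sym R ->
           igs_uedge R x y = igs_uedge R' (phi x) (phi y)),
        IGS_mapping phi R R'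
      & IGS_mapping psi R' R].

Definition IGS_sub (V T : finType) (R R' : IGS V T) : Prop :=
  igs_sym R \subset igs_sym R' /\ IGS_mapping id R R'.

(* Cubical IGS.  Coordinates c_i in {1,...,L} are represented by       *)
(* 'I_L (value c_i - 1); sheets {1,...,s} by 'I_s (value sheet - 1);   *)
(* the type t_j by j : 'I_d.                                           *)
Definition CSym (d L s : nat) : finType := ({ffun 'I_d -> 'I_L} * 'I_s)%type.

Section Cubical.
Variables (d L s : nat).
Local Notation Sym := (CSym d L s).

Definition crd (i : 'I_d) (x : Sym) : nat := val (x.1 i).
Definition sheet (x : Sym) : nat := val x.2.

Definition same_off (j : 'I_d) (x y : Sym) : bool :=
  [forall i, (i != j) ==> (x.1 i == y.1 i)].

Definition RFull : IGS Sym 'I_d :=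
  MkIGS [set: Sym]
    (fun j x y => same_off j x y && (crd j y == (crd j x).+1))
    (fun j x y => [&& same_off j x y, crd j x == L.-1, crd j y == 0
                    & sheet x == sheet y]).

Definition star (j : 'I_d) (x : Sym) : bool :=
  [forall i, (i != j) ==> ((crd i x == 0) || (crd i x == L.-1))]
  && (sheet x == 0).

Definition setc (x : Sym) (f : 'I_d -> 'I_L) : Sym := ([ffun i => f i], x.2).

Definition eta (j : 'I_d) (x : Sym) : Sym :=
  setc x (fun i => if i == j then rev_ord (x.1 j) else x.1 i).
Definition alphaP (j k : 'I_d) (x : Sym) : Sym :=
  setc x (fun i => if i == j then x.1 k else if i == k then x.1 j else x.1 i).
Definition alphaM (j k : 'I_d) (x : Sym) : Sym :=
  setc x (fun i => if i == k then rev_ord (x.1 j)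
                   else if i == j then rev_ord (x.1 k) else x.1 i).

Definition cubical (R : IGS Sym 'I_d) : Prop :=
  IGS_wf R /\ IGS_sub R RFull /\
  [/\
      (forall j x, star j x -> x \in igs_sym R),
      (forall j x y, star j x -> star j y -> same_off j x y ->
         crd j y = (crd j x).+1 -> igs_edge R x y),
      (forall j x y, star j x -> star j y -> same_off j x y ->
         crd j x = L.-1 -> crd j y = 0 -> igs_glue R j x y)
    &
      (forall j, IGS_iso (eta j) R R) /\
      (forall j k, j != k -> IGS_iso (alphaP j k) R R /\ IGS_iso (alphaM j k) R R)].

End Cubical.

(* Read a word [v] of [G_m] as the point of [{0, ..., L^m - 1}^d] whose [j]-th
   coordinate has the base-[L] digits [c_j(v_1) ... c_j(v_m)].  In a cubical
   system an edge of type [j] of [G_m] adds one to the [j]-th coordinate, fixes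
   the others, and changes sheets only at the last nonzero digit of the new
   [j]-th coordinate.  An intersection path of [G_m] lifts to paths of length at
   most some [B] in every [G_n]; at depth [n = m + B + 1] this forces each
   coordinate to take at most two consecutive values along the path.  Hence all
   its [j]-edges change the sheet at one common position [q_j], and a vertex of
   the path is determined by which of its coordinates agree with those of the
   start and by its sheets at the positions [q_j].  A loop-free intersection
   path therefore has at most [(2 (s + 1))^d] vertices, and [N(w)] has diameter
   at most twice that. *)

From mathcomp Require Import all_boot zify.
From Stdlib Require Import ClassicalEpsilon.

Set Implicit Arguments.
Unset Strict Implicit.
Unset Printing Implicit Defensive.

Section Numerals.
Variable L : nat.

Definition num_of_digits (ds : seq nat) : nat := foldl (fun n x => n * L + x) 0 ds.

Lemma num_of_digits_rcons ds x : num_of_digits (rcons ds x) = num_of_digits ds * L + x.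
Proof. by rewrite /num_of_digits foldl_rcons. Qed.

Lemma num_of_digits_cat ds es :
  num_of_digits (ds ++ es) = num_of_digits ds * L ^ size es + num_of_digits es.
Proof.
elim/last_ind: es => [|es x IH]; first by rewrite cats0 muln1 addn0.
rewrite -rcons_cat !num_of_digits_rcons IH size_rcons expnS; nia.
Qed.

Lemma num_of_digits_lt ds : all (fun x => x < L) ds -> num_of_digits ds < L ^ size ds.
Proof.
elim/last_ind: ds => [//|ds x IH].
rewrite all_rcons num_of_digits_rcons size_rcons expnS => /andP[ltxL /IH]; nia.
Qed.

Lemma num_of_digits_inj ds es : size ds = size es ->
  all (fun x => x < L) ds -> all (fun x => x < L) es ->
  num_of_digits ds = num_of_digits es -> ds = es.
Proof.
elim/last_ind: ds es => [|ds x IH] es; first by case: es.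
case/lastP: es => [|es y]; first by rewrite size_rcons.
rewrite !size_rcons !all_rcons !num_of_digits_rcons => -[size_eq].
move=> /andP[ltxL ds_lt] /andP[ltyL es_lt] eq_num.
have eq_xy : x = y.
  by move/(congr1 (modn^~ L)): eq_num; rewrite !modnMDl !modn_small.
rewrite eq_xy in eq_num *; congr rcons; apply: IH => //.
by apply/eqP; rewrite -(eqn_pmul2r (leq_ltn_trans (leq0n y) ltyL)) -(eqn_add2r y) eq_num.
Qed.

Lemma num_of_digits_take_le ds es m k B :
  size ds = m + k -> size es = m + k -> all (fun x => x < L) es -> B < L ^ k ->
  num_of_digits ds <= num_of_digits es + B ->
  num_of_digits (take m ds) <= (num_of_digits (take m es)).+1.
Proof.
move=> size_ds size_es es_lt ltBLk close.
have split_num fs : size fs = m + k ->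
    num_of_digits fs = num_of_digits (take m fs) * L ^ k + num_of_digits (drop m fs).
  move=> size_fs; rewrite -{1}(cat_take_drop m fs) num_of_digits_cat.
  by rewrite size_drop size_fs addKn.
have drop_es_lt : num_of_digits (drop m es) < L ^ k.
  rewrite -[k](addKn m) -size_es -size_drop num_of_digits_lt //.
  by apply/allP=> x /mem_drop; apply: (allP es_lt).
rewrite (split_num ds) // (split_num es) // in close.
rewrite -ltnS -(@ltn_pmul2r (L ^ k)) ?(leq_ltn_trans (leq0n B)) // mulSn mulSn.
move: close drop_es_lt ltBLk; set N := L ^ k; lia.
Qed.

End Numerals.

(* Junk value [0] when every digit is zero. *)
Definition last_nz_index (ds : seq nat) : nat := size ds - (find (predC1 0) (rev ds)).+1.

Lemma last_nz_index_rcons ds x :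
  last_nz_index (rcons ds x) = if x == 0 then last_nz_index ds else size ds.
Proof.
rewrite /last_nz_index rev_rcons size_rcons /=.
by case: eqP => _; rewrite ?subn1 // subSS.
Qed.

Section PathLemmas.
Variables (T : eqType) (e : rel T).

Lemma path_lipschitz (f : T -> nat) :
  (forall a b, e a b -> f a <= (f b).+1 /\ f b <= (f a).+1) ->
  forall x p, path e x p -> {in x :: p &, forall a b, f a <= f b + size p}.
Proof.
move=> lip x p; elim: p x => [|y p IH] x /=.
  by move=> _ a b; rewrite !inE => /eqP-> /eqP->; rewrite addn0.
case/andP=> /lip[fxy fyx] /IH{}IH a b.
rewrite !(in_cons x) => /predU1P[->|a_p] /predU1P[->|b_p].
- lia.
- have := IH y b (mem_head y p) b_p; lia.
- have := IH a y a_p (mem_head y p); lia.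
- have := IH a b a_p b_p; lia.
Qed.

Lemma path_in_const (U : Type) (f : T -> U) x p :
  path e x p -> {in x :: p &, forall a b, e a b -> f a = f b} ->
  {in x :: p, forall a, f a = f x}.
Proof.
elim: p x => [|y p IH] x /=; first by move=> _ _ a; rewrite inE => /eqP->.
case/andP=> exy yp const a; rewrite in_cons => /predU1P[-> //|a_yp].
have fxy : f x = f y by apply: const => //; rewrite ?mem_head // in_cons mem_head orbT.
rewrite fxy; apply: IH => // b c b_yp c_yp.
by apply: const; rewrite in_cons ?b_yp ?c_yp orbT.
Qed.

End PathLemmas.

Lemma last_rev_belast (T : Type) (x : T) p : last (last x p) (rev (belast x p)) = x.
Proof. by rewrite -(last_cons x) -rev_rcons -lastI rev_cons last_rcons. Qed.

Section IGSPaths.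
Variables (V T : finType) (R : IGS V T).

Definition adjb : rel (seq V) :=
  fun w v => if excluded_middle_informative (adj R w v) then true else false.

Lemma adjbP w v : reflect (adj R w v) (adjb w v).
Proof. by rewrite /adjb; case: excluded_middle_informative => ?; constructor. Qed.

Lemma adjb_sym : symmetric adjb.
Proof. by move=> w v; apply/adjbP/adjbP => -[t Ht]; exists t; tauto. Qed.

Lemma chain_adjE x p : chain_adj R x p <-> path adjb x p.
Proof.
elim: p x => [//|y p IH] x /=.
by split=> [[/adjbP-> /IH->] //|/andP[/adjbP xy /IH]].
Qed.

Lemma is_pathE m x p :
  is_path R m (x :: p) <-> all (word R m) (x :: p) /\ path adjb x p.
Proof. by rewrite /is_path chain_adjE. Qed.

Lemma is_path_detour m w p1 p2 :
  is_path R m (w :: p1) -> is_path R m (w :: p2) ->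
  is_path R m (last w p1 :: rev (belast w p1) ++ p2).
Proof.
have rev_w : last w p1 :: rev (belast w p1) = rev (w :: p1).
  by rewrite [w :: p1]lastI rev_rcons.
case/is_pathE=> words1 path1 /is_pathE[words2 path2]; apply/is_pathE; split.
  by rewrite -cat_cons rev_w all_cat all_rev words1; case/andP: words2.
rewrite cat_path last_rev_belast path2 rev_path andbT.
by rewrite (eq_path (e' := adjb)) // => a b; apply: adjb_sym.
Qed.

Lemma mem_squash (s : seq (seq V)) : {subset squash s <= s}.
Proof.
elim: s => [//|x s IH] v; case: s IH => [//|y s] IH /=.
case: (x == y); first by move/IH=> v_ys; rewrite in_cons v_ys orbT.
rewrite in_cons => /predU1P[->|/IH v_ys]; first exact: mem_head.
by rewrite in_cons v_ys orbT.
Qed.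

Lemma mem_proj k (p : seq (seq V)) y : y \in proj k p -> exists2 a, a \in p & y = take k a.
Proof. by move/mem_squash/mapP. Qed.

End IGSPaths.

Lemma Em_mono (V T : finType) (R R' : IGS V T) :
  igs_sym R \subset igs_sym R' ->
  (forall t, subrel (igs_ety R t) (igs_ety R' t)) ->
  (forall t, subrel (igs_glue R t) (igs_glue R' t)) ->
  forall w v t, Em R w v t -> Em R' w v t.
Proof.
move=> /subsetP sym_sub ety_sub glue_sub w v t.
elim=> {w v t} [w a b t w_sym ab | w v a b t _ IH ab].
  apply: Em_in (ety_sub _ _ _ ab); apply: sub_all w_sym => x; exact: sym_sub.
exact: Em_glue IH (glue_sub _ _ _ ab).
Qed.

Section FullSystem.
Variables (d L s : nat).
Local Notation Sym := (CSym d L s).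
Local Notation RF := (RFull d L s).

Definition digits (j : 'I_d) (v : seq Sym) : seq nat := map (crd j) v.
Definition word_coord (j : 'I_d) (v : seq Sym) : nat := num_of_digits L (digits j v).
Definition sheets (v : seq Sym) : seq 'I_s := map snd v.

Lemma digits_lt j v : all (fun x => x < L) (digits j v).
Proof. by apply/allP=> _ /mapP[a _ ->]; apply: ltn_ord. Qed.

Lemma word_eq v v' :
  (forall j, digits j v = digits j v') -> sheets v = sheets v' -> v = v'.
Proof.
elim: v v' => [|a v IH] [|a' v'] //= eq_digits [eq_sheet /IH-> //]; last first.
  by move=> j; case: (eq_digits j).
congr (_ :: _); case: a a' eq_digits eq_sheet => [c x] [c' x'] /= eq_digits ->.
congr (_, _); apply/ffunP=> i; apply: val_inj; by case: (eq_digits i).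
Qed.

Lemma same_off_crd t (a b : Sym) i : same_off t a b -> i != t -> crd i a = crd i b.
Proof. by move/forallP/(_ i)/implyP=> same /same/eqP; rewrite /crd => ->. Qed.

Lemma Em_full_size y z t : Em RF y z t -> size y = size z.
Proof. by elim=> {y z t} [w a b t _ _|w v a b t _ IH _]; rewrite !size_rcons ?IH. Qed.

Lemma Em_full_digits y z t : Em RF y z t ->
  word_coord t z = (word_coord t y).+1 /\ forall i, i != t -> digits i z = digits i y.
Proof.
rewrite /word_coord /digits.
elim=> {y z t} [w a b t _ /andP[same /eqP step] | w v a b t _ [IH_t IH_i] glue].
  rewrite !map_rcons !num_of_digits_rcons step addnS; split=> // i ne_it.
  by rewrite !map_rcons (same_off_crd same ne_it).
case/and4P: glue => same /eqP a_top /eqP b_bot _.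
rewrite !map_rcons !num_of_digits_rcons IH_t a_top b_bot addn0; split.
  have L_pos : 0 < L := leq_ltn_trans (leq0n _) (ltn_ord (a.1 t)).
  by rewrite -addnS prednK // mulSn addnC.
by move=> i ne_it; rewrite !map_rcons IH_i // (same_off_crd same ne_it).
Qed.

Lemma onth_rcons (U : Type) (u : seq U) x k :
  onth (rcons u x) k = if k < size u then onth u k else if k == size u then Some x else None.
Proof.
rewrite -cats1 onth_cat; case: ltnP => // le_uk.
by rewrite eqn_leq le_uk andbT -subn_eq0; case: (k - size u) => [|[]].
Qed.

Lemma Em_full_sheets y z t : Em RF y z t ->
  forall k, k != last_nz_index (digits t z) -> onth (sheets y) k = onth (sheets z) k.
Proof.
move=> yz; have := Em_full_size yz; elim: yz => {y z t}.
  move=> w a b t _ /andP[_ /eqP step] _ k.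
  rewrite /digits map_rcons last_nz_index_rcons step size_map /sheets !map_rcons.
  by rewrite !onth_rcons size_map => /negbTE->.
move=> w v a b t _ IH glue; rewrite !size_rcons => -[size_wv] k.
case/and4P: glue => _ _ /eqP b_bot /eqP same_sheet.
rewrite /digits map_rcons last_nz_index_rcons b_bot eqxx => ne_k.
rewrite /sheets !map_rcons !onth_rcons !size_map size_wv.
case: ltnP => [lt_kv|_]; first by apply: IH; rewrite ?size_wv.
by rewrite (val_inj same_sheet).
Qed.

Lemma adj_full_word_coord y z j : adj RF y z ->
  word_coord j y <= (word_coord j z).+1 /\ word_coord j z <= (word_coord j y).+1.
Proof.
have step u v t : Em RF u v t ->
    word_coord j u <= (word_coord j v).+1 /\ word_coord j v <= (word_coord j u).+1.
  case/Em_full_digits=> succ_t same_i; case: (eqVneq j t) => [->|ne_jt].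
    by rewrite succ_t leqnn ltnW.
  by rewrite /word_coord same_i // leqnSn.
by case=> t [/step|/step[]].
Qed.

End FullSystem.

Section CubicalEdges.
Variables (d L s : nat) (R : IGS (CSym d L s) 'I_d).
Hypotheses (hL : 1 < L) (hs : 0 < s) (cubR : cubical R).
Local Notation Sym := (CSym d L s).
Local Notation RF := (RFull d L s).

Let bot : 'I_L := Ordinal (ltnW hL).
Let top_lt : L.-1 < L. Proof. by rewrite ltn_predL ltnW. Qed.
Let top : 'I_L := Ordinal top_lt.
Let origin : Sym := ([ffun => bot], Ordinal hs).
Let corner (j : 'I_d) : Sym := ([ffun i => if i == j then top else bot], Ordinal hs).

Let crd_corner j i : crd i (corner j) = if i == j then L.-1 else 0.
Proof. by rewrite /crd ffunE; case: (i == j). Qed.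

Let glue_corner j : igs_glue R j (corner j) origin.
Proof.
have [_ [_ [_ _ C3 _]]] := cubR.
have star_j x : (forall i, i != j -> crd i x = 0) -> sheet x = 0 -> star j x.
  move=> off_j sheet0; rewrite /star sheet0 eqxx andbT.
  by apply/forallP=> i; apply/implyP=> /off_j->.
apply: C3.
- by apply: star_j => // i /negbTE ne_ij; rewrite crd_corner ne_ij.
- by apply: star_j => // i _; rewrite /crd ffunE.
- by apply/forallP=> i; apply/implyP=> /negbTE ne_ij; rewrite !ffunE ne_ij.
- by rewrite crd_corner eqxx.
- by rewrite /crd ffunE.
Qed.

(* The image in the full system of a [t]-edge must map the corner pair of
   [I_t] into a gluing rule, which fixes both its type and its orientation. *)
Lemma cubical_ety t a b : igs_ety R t a b -> igs_ety RF t a b.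
Proof.
move=> ab; have [[_ [_ [asym _]]] [[_ [_ edge_map _ ety_map ety_rev_map]] _]] := cubR.
have e_ab : igs_edge R a b by apply/existsP; exists t.
have L1_neq0 : L.-1 != 0 by rewrite -lt0n -ltnS prednK // ltnW.
case: (edge_map _ _ e_ab) => [/existsP[t' ab'] | /existsP[t' ba'] | /= eq_ab].
- have /and4P[_ /eqP top_t' _ _] := ety_map _ _ _ _ ab ab' _ _ (glue_corner t).
  move: top_t'; rewrite crd_corner; case: eqP ab' => [-> //|_ _ /esym/eqP].
  by rewrite (negbTE L1_neq0).
- have /and4P[_ /eqP top_t' _ _] := ety_rev_map _ _ _ _ ab ba' _ _ (glue_corner t).
  by move: L1_neq0; rewrite -top_t' /crd ffunE.
- by move: e_ab (asym _ _ e_ab); rewrite eq_ab => ->.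
Qed.

Lemma cubical_glue t a b : igs_glue R t a b -> igs_glue RF t a b.
Proof.
have [[_ [_ [_ [_ [ety_surj _]]]]] [[_ [_ _ _ ety_map _]] _]] := cubR.
have [x [y xy]] := ety_surj t.
exact: ety_map xy (cubical_ety xy) a b.
Qed.

Lemma cubical_adj w v : adj R w v -> adj RF w v.
Proof.
have Em_full := Em_mono (R' := RF) (subsetT _) cubical_ety cubical_glue.
by case=> t [/Em_full | /Em_full] wv; exists t; [left | right].
Qed.

End CubicalEdges.

Section FlatWalk.
Variables (d L s : nat) (e : rel (seq (CSym d L s))).
Hypothesis e_full : forall a b, e a b -> adj (RFull d L s) a b.
Variables (m : nat) (w : seq (CSym d L s)) (p : seq (seq (CSym d L s))).
Hypotheses (walk : path e w p) (size_walk : {in w :: p, forall v, size v = m}).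
Hypothesis flat : forall j, {in w :: p &, forall y z, word_coord j y <= (word_coord j z).+1}.

Lemma flat_digits_eq j y z : y \in w :: p -> z \in w :: p ->
  word_coord j y = word_coord j z -> digits j y = digits j z.
Proof.
move=> y_in z_in; apply: num_of_digits_inj; rewrite ?digits_lt //.
by rewrite !size_map !size_walk.
Qed.

Lemma flat_edge_sheets j : exists q, {in w :: p &, forall y z, Em (RFull d L s) y z j ->
  forall k, k != q -> onth (sheets y) k = onth (sheets z) k}.
Proof.
case: (excluded_middle_informative (exists y0 z0,
    [/\ y0 \in w :: p, z0 \in w :: p & Em (RFull d L s) y0 z0 j])); last first.
  by move=> no_edge; exists 0 => y z y_in z_in yz; case: no_edge; exists y, z.
case=> y0 [z0 [y0_in z0_in y0z0]]; exists (last_nz_index (digits j z0)).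
move=> y z y_in z_in yz; suff <- : digits j z = digits j z0 by apply: Em_full_sheets.
apply: flat_digits_eq => //.
have [succ0 _] := Em_full_digits y0z0; have [succ _] := Em_full_digits yz.
have := flat j z_in y0_in; have := flat j z0_in y_in; lia.
Qed.

Lemma flat_sheets : exists q : 'I_d -> nat, {in w :: p, forall v k,
  (forall j, k != q j) -> onth (sheets v) k = onth (sheets w) k}.
Proof.
have [q q_edge] := fin_all_exists flat_edge_sheets.
exists q => v v_in k off_q.
apply: (path_in_const (f := fun v => onth (sheets v) k) walk) => // y z y_in z_in.
case/e_full=> t [yz | zy]; first exact: q_edge t y z y_in z_in yz k (off_q t).
by rewrite (q_edge t z y z_in y_in zy k (off_q t)).
Qed.

Lemma flat_walk_card V : uniq V -> {subset V <= w :: p} -> size V <= (2 * s.+1) ^ d.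
Proof.
move=> uniq_V sub_V; have [q sheets_off_q] := flat_sheets.
pose key (v : seq (CSym d L s)) : {ffun 'I_d -> bool * option 'I_s} :=
  [ffun j => (word_coord j v == word_coord j w, onth (sheets v) (q j))].
have w_in : w \in w :: p := mem_head w p.
have key_inj : {in w :: p &, injective key}.
  move=> v v' v_in v'_in eq_key.
  have key_j j : key v j = key v' j by rewrite eq_key.
  apply: word_eq => [j|].
    move: (key_j j); rewrite !ffunE => -[eq_at_w _].
    apply: flat_digits_eq => //; move: eq_at_w.
    have := flat j v_in w_in; have := flat j w_in v_in; have := flat j v_in v'_in.
    have := flat j v'_in w_in; have := flat j w_in v'_in; have := flat j v'_in v_in.
    by case: eqP; case: eqP => //; lia.
  apply: eq_from_onth => k; case: (pickP (fun j => k == q j)) => [j /eqP-> | off_q].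
    by move: (key_j j); rewrite !ffunE => -[].
  by rewrite !sheets_off_q // => j; rewrite off_q.
have uniq_key : uniq (map key V).
  by rewrite map_inj_in_uniq // => v v' /sub_V v_in /sub_V v'_in; apply: key_inj.
rewrite -(size_map key) -(card_uniqP uniq_key) (leq_trans (max_card _)) //.
by rewrite card_ffun card_prod card_bool card_option !card_ord.
Qed.

End FlatWalk.

Section BoundedGeometry.
Variables (d L s : nat) (R : IGS (CSym d L s) 'I_d).
Hypotheses (hL : 1 < L) (hs : 0 < s) (cubR : cubical R).

Let adjb_full a b : adjb R a b -> adj (RFull d L s) a b.
Proof. by move/adjbP; apply: cubical_adj. Qed.

Let adjb_word_coord j a b : adjb R a b ->
  word_coord j a <= (word_coord j b).+1 /\ word_coord j b <= (word_coord j a).+1.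
Proof. by move/adjb_full/(adj_full_word_coord j). Qed.

Lemma ipath_flat m theta : 1 <= m -> is_ipath R m theta ->
  forall j, {in theta &, forall y z, word_coord j y <= (word_coord j z).+1}.
Proof.
move=> m_pos [Theta [Theta_path <- Theta_proj [B len_B]]] j y z.
have lt_m_mB : m < m + B.+1 by rewrite addnS ltnS leq_addr.
have n_pos : 1 <= m + B.+1 by rewrite addnS.
rewrite -(Theta_proj _ _ m_pos lt_m_mB).
case: (Theta (m + B.+1)) (Theta_path _ n_pos) (len_B (m + B.+1)) => [[]|x p].
move=> /is_pathE[words walk] /= len_p /mem_proj[a a_in ->] /mem_proj[b b_in ->].
have size_n v : v \in x :: p -> size (digits j v) = m + B.+1.
  by move/(allP words)/andP=> [/eqP size_v _]; rewrite size_map.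
rewrite /word_coord /digits !map_take; apply: (num_of_digits_take_le (k := B.+1) (B := B)).
- exact: size_n.
- exact: size_n.
- exact: digits_lt.
- exact: ltn_trans (ltnSn B) (ltn_expl _ hL).
- apply: leq_trans (path_lipschitz (adjb_word_coord j) walk a_in b_in) _.
  by rewrite leq_add2l.
Qed.

Lemma inN_short_path w u : 1 <= size w -> inN R w u ->
  exists p, [/\ is_path R (size w) (w :: p), last w p = u & size p < (2 * s.+1) ^ d].
Proof.
move=> w_pos [theta [theta_ipath theta_head theta_last]].
have flat := ipath_flat w_pos theta_ipath.
have [Theta [Theta_path Theta_m _ _]] := theta_ipath.
have := Theta_path _ w_pos; rewrite Theta_m.
case: theta {theta_ipath Theta_m} theta_head theta_last flat => // _ p [->] /= last_p flat.
case/is_pathE=> words walk; case: (shortenP walk) last_p => p' walk' uniq_p' sub_p' last_p.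
have sub_wp' : {subset w :: p' <= w :: p}.
  by move=> v; rewrite !in_cons => /predU1P[->|/sub_p'->]; rewrite ?eqxx ?orbT.
exists p'; split=> //.
  by apply/is_pathE; split=> //; apply/allP=> v /sub_wp'; apply: (allP words).
have size_walk : {in w :: p, forall v, size v = size w}.
  by move=> v /(allP words)/andP[/eqP].
exact: (flat_walk_card adjb_full walk size_walk flat uniq_p' sub_wp').
Qed.

Lemma cubical_bounded_geometry : bounded_geometry R.
Proof.
exists (2 * (2 * s.+1) ^ d) => w w_pos _ u v.
case/(inN_short_path w_pos)=> p1 [path1 <- size1].
case/(inN_short_path w_pos)=> p2 [path2 <- size2].
exists (last w p1 :: rev (belast w p1) ++ p2); split.
- exact: is_path_detour.
- by [].
- by rewrite last_cons last_cat last_rev_belast.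
- rewrite /= size_cat size_rev size_belast mul2n -addnn.
  exact: leq_add (ltnW size1) (ltnW size2).
Qed.

End BoundedGeometry.

Theorem proposition5p7 (d L s : nat) (hd : 1 <= d) (hs : 1 <= s) (hL : 3 <= L)
    (R : IGS (CSym d L s) 'I_d) :
  cubical R -> bounded_geometry R.
Proof. exact: cubical_bounded_geometry (ltnW hL) hs. Qed.
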